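(* In the big-action setting below, assume $n\ge2$. Then: (1) for every $i\in\{1,\dots,n-1\}$, the map $\ell_{i,i+1}:V\to\mathbb F_p$ is $\mathbb F_p$-linear; (2) for every $i\in\{1,\dots,n-1\}$ such that $\ell_{i,i+1}$ is not identically zero, putting $\mathcal L_{i,i+1}(X)=\prod_{y\in\ker\ell_{i,i+1}}(X-y)$, there exists $\lambda_i\in k\setminus\{0\}$ such that $\ell_{i,i+1}(y)=\lambda_i\mathcal L_{i,i+1}(y)$ for all $y\in V$, and $V$ is exactly the set of roots in $k$ of $\lambda_i^p\mathcal L_{i,i+1}^p-\lambda_i\mathcal L_{i,i+1}$.
   Context: Big-action setting. Let $k$ be an algebraically closed field of characteristic $p>0$, $C$ a connected nonsingular projective curve over $k$ of genus $g\ge 2$, and $G$ a finite $p$-subgroup of $\mathrm{Aut}_k(C)$ with $|G|/g>2p/(p-1)$ (a ''big action'' $(C,G)$). It is known that there is a point $\infty\in C$ such that $G$ equals its own first (wild) ramification group at $\infty$, that $\infty$ is the only ramification point of $C\to C/G\cong\mathbb P^1_k$, that the second lower ramification group $G_2$ of $G$ at $\infty$ is a nontrivial proper subgroup of $G$ equal to the commutator subgroup $D(G)$, and that $C/G_2\cong\mathbb P^1_k$. Assume $G_2\cong(\mathbb Z/p\mathbb Z)^n$ with $n\ge1$. Put $L=k(C)$ and write $L^{G_2}=k(X)$, where $X$ is a coordinate on $C/G_2$ with pole at the image of $\infty$; then $G/G_2$ acts on $k(X)$ by translations $X\mapsto X+y$, $y$ ranging over an $\mathbb F_p$-subspace $V\subset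 k$ of dimension $v$, giving an exact sequence $0\to G_2\to G\to V\to 0$, $\sigma\mapsto\sigma(X)-X$. Let $\wp(Z)=Z^p-Z$. A polynomial in $k[X]$ is called reduced if it is a $k$-linear combination of monomials $X^j$ with $p\nmid j$; every $f\in k[X]$ is congruent modulo $\wp(k[X])$ to a unique reduced polynomial. Let $A=(\wp(L)\cap k[X])/\wp(k[X])$, an $n$-dimensional $\mathbb F_p$-vector space, and for $\bar f\in A$ let $\deg\bar f=\min\{\deg(f+\wp(P)):P\in k[X]\}$. Fix an $\mathbb F_p$-basis $\bar f_1,\dots,\bar f_n$ of $A$ with $m_i:=\deg\bar f_i$ such that (a) $p\nmid m_i$, (b) $m_1\le\dots\le m_n$, (c) for all $(\lambda_1,\dots,\lambda_n)\in\mathbb F_p^n\setminus\{0\}$, $\deg(\sum_i\lambda_i\bar f_i)=\max_i\deg(\lambda_i\bar f_i)$. Let $f_i\in k[X]$ be the reduced representative of $\bar f_i$ (so $\deg f_i=m_i$); then $L=k(X,W_1,\dots,W_n)$ with $W_i^p-W_i=f_i(X)$. For every $y\in V$ and every $i$ one has $f_i(X+y)-f_i(X)\equiv\sum_{j=1}^{i-1}\ell_{j,i}(y)f_j(X)\bmod\wp(k[X])$ for uniquely determined maps $\ell_{j,i}:V\to\mathbb F_p$ (the matrix of $\bar f\mapsto\overline{f(X+y)}$ on $A$ in this basis is upper unitriangular with entries $\ell_{j,i}(y)$). *)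

From HB Require Import structures.
From mathcomp Require Import all_boot all_order all_algebra.
Set Implicit Arguments. Unset Strict Implicit. Unset Printing Implicit Defensive.
Import GRing.Theory.
Local Open Scope ring_scope.

Definition fp_emb (k : nzRingType) (p : nat) (a : 'F_p) : k := (nat_of_ord a)%:R.

Definition wp (k : nzRingType) (p : nat) (P : {poly k}) : {poly k} := P ^+ p - P.

Definition AS_equiv (k : nzRingType) (p : nat) (f g : {poly k}) : Prop :=
  exists P : {poly k}, f - g = wp p P.

Definition reduced (k : nzRingType) (p : nat) (f : {poly k}) : Prop :=
  forall j : nat, (p %| j)%N -> f`_j = 0.

(* class_size p f s : s = min { size (f + wp P) : P in k[X] }, i.e. the
   degree of the class of f modulo wp(k[X]) is s - 1
   (s = 0 meaning the class degree is -infinity, i.e. the zero class). *)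
Definition class_size (k : nzRingType) (p : nat) (f : {poly k}) (s : nat) : Prop :=
  (exists P : {poly k}, size (f + wp p P) = s) /\
  (forall P : {poly k}, (s <= size (f + wp p P)%R)%N).

From HB Require Import structures.
From mathcomp Require Import all_boot all_order all_algebra.
From mathcomp Require Import ring.
Import GRing.Theory.
Local Open Scope ring_scope.

(* Compare the two ways of translating f_{i+1} by y + z: through
   X + y + z directly, and first by y and then by z.  Modulo the
   Artin-Schreier image wp(k[X]) both are congruent to combinations of
   f_1, ..., f_i, and translating a combination of f_1, ..., f_i only
   changes it by a combination of f_1, ..., f_{i-1}.  Hence the coefficients
   of f_i agree up to a combination of lower f_j, and since no nonzero
   F_p-combination of the f_j lies in wp(k[X]) (hypothesis (c)), l_{i,i+1}
   is additive on V, hence F_p-linear.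

   For a finite additive subgroup K of k the polynomial
   prod_{w in K} (X - w) is additive: P(X + y) - P(X) - P(y) has degree
   < |K| and vanishes on K.  Applied to K = ker l, P and l are two F_p-linear
   maps on V with the same kernel and P(V) lies in lam^{-1} F_p, which gives
   l = lam P; finally x is a root of lam^p P^p - lam P iff lam P(x) is in F_p,
   i.e. iff x lies in V + ker P = V. *)

Set Implicit Arguments. Unset Strict Implicit. Unset Printing Implicit Defensive.

Section PrimeFieldEmbedding.
Variables (k : fieldType) (p : nat).
Hypothesis pk : p \in [pchar k].

Lemma fp_emb_natr (N : nat) : fp_emb k (N%:R : 'F_p) = N%:R.
Proof.
by rewrite /fp_emb val_Fp_nat ?(pcharf_prime pk) // (GRing.natr_mod_pchar pk).
Qed.

Lemma fp_embD (a b : 'F_p) : fp_emb k (a + b) = fp_emb k a + fp_emb k b.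
Proof. by rewrite -(natr_Zp a) -(natr_Zp b) -natrD !fp_emb_natr natrD. Qed.

Lemma fp_embM (a b : 'F_p) : fp_emb k (a * b) = fp_emb k a * fp_emb k b.
Proof. by rewrite -(natr_Zp a) -(natr_Zp b) -natrM !fp_emb_natr natrM. Qed.

Lemma fp_emb0 : fp_emb k (0 : 'F_p) = 0.
Proof. exact: (fp_emb_natr 0). Qed.

Lemma fp_emb1 : fp_emb k (1 : 'F_p) = 1.
Proof. exact: (fp_emb_natr 1). Qed.

Lemma fp_embN (a : 'F_p) : fp_emb k (- a) = - fp_emb k a.
Proof. by apply/eqP; rewrite -subr_eq0 opprK -fp_embD addNr fp_emb0. Qed.

Lemma fp_emb_inj : injective (fp_emb k (p := p)).
Proof.
move=> a b eq_ab; apply/eqP; rewrite -subr_eq0; apply/eqP/val_inj => /=.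
have lt_p : (nat_of_ord (a - b)%R < p)%N.
  by have := ltn_ord (a - b)%R; rewrite [X in (_ < X)%N]Fp_cast ?(pcharf_prime pk).
move: eq_ab => /eqP; rewrite -subr_eq0 -fp_embN -fp_embD /fp_emb.
by rewrite -(dvdn_pcharf pk) /dvdn modn_small // => /eqP.
Qed.

Lemma fp_emb_frobenius (a : 'F_p) : fp_emb k a ^+ p = fp_emb k a.
Proof. by rewrite /fp_emb -(pFrobenius_autE pk) pFrobenius_aut_nat. Qed.

Lemma frobenius_fixed_in_Fp (t : k) : t ^+ p = t -> exists c : 'F_p, t = fp_emb k c.
Proof.
move=> t_fixed; case: (boolP [exists c : 'F_p, t == fp_emb k c]).
  by move/existsP => [c /eqP ->]; exists c.
rewrite negb_exists => /forallP t_notin; exfalso.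
have p_prime := pcharf_prime pk.
pose P : {poly k} := 'X^p - 'X.
have size_P : size P = p.+1.
  by rewrite size_polyDl size_polyXn // size_polyN size_polyX ltnS prime_gt1.
have P_neq0 : P != 0 by rewrite -size_poly_eq0 size_P.
pose s := t :: [seq fp_emb k c | c <- enum 'F_p].
have roots_s : all (root P) s.
  apply/allP => u; rewrite inE => /orP [/eqP ->|/mapP [c _ ->]];
    by rewrite /root /P !hornerE ?t_fixed ?fp_emb_frobenius // subrr.
have uniq_s : uniq s.
  rewrite /= map_inj_uniq ?enum_uniq; last exact: fp_emb_inj.
  by rewrite andbT; apply/mapP => [[c _ /eqP]]; rewrite (negbTE (t_notin c)).
have := max_poly_roots P_neq0 roots_s uniq_s.
by rewrite size_P /= size_map -cardE card_Fp // ltnn.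
Qed.

End PrimeFieldEmbedding.

Section ArtinSchreierImage.
Variables (k : comNzRingType) (p : nat).
Hypothesis pk : p \in [pchar k].

Definition AS_image (g : {poly k}) : Prop := exists P : {poly k}, g = wp p P.

Let pk_poly : p \in [pchar {poly k}]. Proof. by rewrite pchar_poly. Qed.

Lemma frobenius_polyD (P Q : {poly k}) : (P + Q) ^+ p = P ^+ p + Q ^+ p.
Proof. by rewrite -!(pFrobenius_autE pk_poly) rmorphD. Qed.

Lemma frobenius_polyN (P : {poly k}) : (- P) ^+ p = - P ^+ p.
Proof. by rewrite -!(pFrobenius_autE pk_poly) rmorphN. Qed.

Lemma AS_image0 : AS_image 0.
Proof.
have p_gt0 := prime_gt0 (pcharf_prime pk).
by exists 0; rewrite /wp expr0n eqn0Ngt p_gt0 subrr.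
Qed.

Lemma AS_imageD g h : AS_image g -> AS_image h -> AS_image (g + h).
Proof. by move=> [P ->] [Q ->]; exists (P + Q); rewrite /wp frobenius_polyD; ring. Qed.

Lemma AS_imageZ c g : c ^+ p = c -> AS_image g -> AS_image (c *: g).
Proof. by move=> c_fixed [P ->]; exists (c *: P); rewrite /wp exprZn c_fixed scalerBr. Qed.

Lemma AS_imageN g : AS_image g -> AS_image (- g).
Proof. by move=> [P ->]; exists (- P); rewrite /wp frobenius_polyN; ring. Qed.

Lemma AS_imageB g h : AS_image g -> AS_image h -> AS_image (g - h).
Proof. by move=> Sg Sh; apply/AS_imageD/AS_imageN. Qed.

Lemma AS_image_comp g q : AS_image g -> AS_image (g \Po q).
Proof. by move=> [P ->]; exists (P \Po q); rewrite /wp rmorphB rmorphXn. Qed.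

Lemma AS_image_class_size g s : AS_image g -> ~ class_size p g s.+1.
Proof.
move=> [Q ->] [_ /(_ (- Q))]; rewrite /wp frobenius_polyN.
by rewrite (_ : _ + _ = 0) ?size_poly0 //; ring.
Qed.

End ArtinSchreierImage.

Section FpSubspace.
Variables (k : fieldType) (p : nat).
Hypothesis pk : p \in [pchar k].
Variable V : seq k.
Hypothesis V0 : 0 \in V.
Hypothesis V_closed : forall (a : 'F_p) (y z : k), y \in V -> z \in V ->
  fp_emb k a * y + z \in V.

Lemma memV_scale (a : 'F_p) y : y \in V -> fp_emb k a * y \in V.
Proof. by move=> yV; have := V_closed a yV V0; rewrite addr0. Qed.

Lemma memV_add y z : y \in V -> z \in V -> y + z \in V.
Proof. by move=> yV zV; have := V_closed 1 yV zV; rewrite fp_emb1 // mul1r. Qed.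

Lemma memV_sub y z : y \in V -> z \in V -> y - z \in V.
Proof.
by move=> yV zV; have := V_closed (-1) zV yV; rewrite fp_embN // fp_emb1 // mulN1r addrC.
Qed.

(* An additive map from V to F_p is automatically F_p-linear, since every
   element of F_p is a sum of ones. *)
Lemma additive_Fp_linear (L : k -> 'F_p) :
  {in V &, forall y z, L (y + z) = L y + L z} ->
  forall (a b : 'F_p) (y z : k), y \in V -> z \in V ->
    L (fp_emb k a * y + fp_emb k b * z) = a * L y + b * L z.
Proof.
move=> L_add.
have L_scale (a : 'F_p) y : y \in V -> L (fp_emb k a * y) = a * L y.
  move=> yV; rewrite -{2}(natr_Zp a) /fp_emb.
  elim: (nat_of_ord a) => [|N IH].
    by apply: (@addrI _ (L 0)); rewrite !mul0r -L_add ?addr0.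
  have NyV : N%:R * y \in V by rewrite -(fp_emb_natr pk); apply: memV_scale.
  by rewrite !mulrS !mulrDl !mul1r L_add // IH.
by move=> a b y z yV zV; rewrite L_add ?L_scale //; apply: memV_scale.
Qed.

End FpSubspace.

Section SubgroupPolynomial.
Variable k : idomainType.
Variable K : seq k.
Hypothesis K_uniq : uniq K.
Hypothesis K0 : 0 \in K.
Hypothesis K_sub : {in K &, forall x y, x - y \in K}.

Definition subgroup_poly : {poly k} := \prod_(w <- K) ('X - w%:P).

Lemma root_subgroup_poly x : root subgroup_poly x = (x \in K).
Proof. exact: root_prod_XsubC. Qed.

Lemma subgroup_poly_monic : subgroup_poly \is monic.
Proof. exact: monic_prod_XsubC. Qed.

Lemma size_subgroup_poly : size subgroup_poly = (size K).+1.
Proof. exact: size_prod_XsubC. Qed.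

(* Translating by an element of K permutes K, so it leaves the value of the
   subgroup polynomial unchanged. *)
Lemma subgroup_poly_periodic y w : w \in K -> subgroup_poly.[y + w] = subgroup_poly.[y].
Proof.
move=> wK; rewrite !horner_prod.
have -> : \prod_(a <- K) ('X - a%:P).[y + w]
        = \prod_(b <- [seq a - w | a <- K]) ('X - b%:P).[y].
  by rewrite big_map; apply: eq_bigr => a _; rewrite !hornerXsubC opprB addrA.
apply/perm_big/uniq_perm => [||x]; first by rewrite map_inj_uniq // => a b /addIr.
  exact: K_uniq.
apply/mapP/idP => [[a aK ->]|xK]; first exact: K_sub.
exists (x - (0 - w)); first by rewrite !K_sub.
by rewrite sub0r opprK addrK.
Qed.

(* A monic polynomial and its translate have the same leading term. *)
Lemma size_translate_sub (P : {poly k}) (y : k) : P \is monic ->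
  (size (P \Po ('X + y%:P) - P)%R <= (size P).-1)%N.
Proof.
move=> P_monic; set A := P \Po ('X + y%:P).
have size_A : size A = size P by rewrite size_comp_poly2 // size_XaddC.
have lead_A : lead_coef A = 1.
  by rewrite lead_coef_comp ?size_XaddC // lead_coefXaddC expr1n mulr1; apply/monicP.
apply/leq_sizeP => j le_j; rewrite coefB.
have [->|ne_j] := eqVneq j (size P).-1.
  by rewrite -{1}size_A -!lead_coefE lead_A (monicP P_monic) subrr.
have lt_j : (size P <= j)%N.
  have P_gt0 : (0 < size P)%N by rewrite size_poly_gt0 monic_neq0.
  by rewrite -(prednK P_gt0) ltn_neqAle eq_sym ne_j le_j.
by rewrite !nth_default ?size_A ?subrr.
Qed.

(* The subgroup polynomial is additive: P(X + y) - P(X) - P(y) has degree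
   less than |K| and vanishes on K, so it is zero. *)
Lemma subgroup_poly_additive x y :
  subgroup_poly.[x + y] = subgroup_poly.[x] + subgroup_poly.[y].
Proof.
pose Q := subgroup_poly \Po ('X + y%:P) - subgroup_poly - (subgroup_poly.[y])%:P.
have size_Q : (size Q <= size K)%N.
  rewrite (leq_trans (size_polyD _ _)) // geq_max size_polyN size_polyC.
  have := size_translate_sub y subgroup_poly_monic; rewrite size_subgroup_poly => -> /=.
  by rewrite (leq_trans (leq_b1 _)) // lt0n size_eq0; apply: contraTneq K0 => ->.
have roots_Q : all (root Q) K.
  apply/allP => w wK; rewrite /root /Q !hornerE horner_comp !hornerE.
  have := wK; rewrite -root_subgroup_poly => /rootP ->.
  by rewrite (addrC w) subgroup_poly_periodic // subr0 subrr.
have Q0 : Q = 0.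
  apply: contraTeq size_Q => Q_neq0.
  by rewrite -ltnNge (max_poly_roots Q_neq0 roots_Q K_uniq).
move/(congr1 (horner^~ x)): Q0; rewrite /Q !hornerE horner_comp !hornerE.
by move/eqP; rewrite subr_eq0 subr_eq => /eqP ->; rewrite addrC.
Qed.

Lemma subgroup_poly_mulrn x N : subgroup_poly.[x *+ N] = subgroup_poly.[x] *+ N.
Proof.
elim: N => [|N IH]; last by rewrite !mulrS subgroup_poly_additive IH.
by apply/eqP; rewrite !mulr0n -/(root _ 0) root_subgroup_poly.
Qed.

End SubgroupPolynomial.

Section KernelPolynomial.
Variables (k : fieldType) (p : nat).
Hypothesis pk : p \in [pchar k].
Variable V : seq k.
Hypothesis V_uniq : uniq V.
Hypothesis V0 : 0 \in V.
Hypothesis V_closed : forall (a : 'F_p) (y z : k), y \in V -> z \in V ->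
  fp_emb k a * y + z \in V.
Variable L : k -> 'F_p.
Hypothesis L_linear : forall (a b : 'F_p) (y z : k), y \in V -> z \in V ->
  L (fp_emb k a * y + fp_emb k b * z) = a * L y + b * L z.

Lemma L_sub y z : y \in V -> z \in V -> L (y - z) = L y - L z.
Proof.
move=> yV zV; have := L_linear 1 (-1) yV zV.
by rewrite fp_emb1 // fp_embN // fp_emb1 // !mul1r !mulN1r.
Qed.

Lemma L_scale (a : 'F_p) y : y \in V -> L (fp_emb k a * y) = a * L y.
Proof. by move=> yV; have := L_linear a 0 yV V0; rewrite fp_emb0 // !mul0r !addr0. Qed.

Definition kernel : seq k := [seq y <- V | L y == 0].

Lemma mem_kernel x : (x \in kernel) = (x \in V) && (L x == 0).
Proof. by rewrite mem_filter andbC. Qed.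

Lemma kernel_uniq : uniq kernel.
Proof. exact: filter_uniq. Qed.

Lemma kernel0 : 0 \in kernel.
Proof. by rewrite mem_kernel V0; have := L_sub V0 V0; rewrite !subrr => ->. Qed.

Lemma kernel_sub : {in kernel &, forall x y, x - y \in kernel}.
Proof.
move=> x y; rewrite !mem_kernel => /andP [xV /eqP Lx] /andP [yV /eqP Ly].
by rewrite (memV_sub pk V_closed) // L_sub // Lx Ly subrr.
Qed.

Local Notation Lp := (subgroup_poly kernel).

Lemma kernel_poly_Fp_linear (a : 'F_p) x : Lp.[fp_emb k a * x] = fp_emb k a * Lp.[x].
Proof.
by rewrite /fp_emb !mulr_natl (subgroup_poly_mulrn kernel_uniq kernel0 kernel_sub).
Qed.

Lemma kernel_poly_vanishing y : y \in V -> L y = 0 -> Lp.[y] = 0.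
Proof. by move=> yV Ly; apply/rootP; rewrite root_subgroup_poly mem_kernel yV Ly eqxx. Qed.

(* Fix a vector y1 of V with L y1 = 1; then V is the F_p-line through y1
   plus ker L, and both L and Lp are determined by their value at y1. *)
Section UnitVector.
Variable y1 : k.
Hypothesis y1V : y1 \in V.
Hypothesis L_y1 : L y1 = 1.

Lemma kernel_poly_unit_neq0 : Lp.[y1] != 0.
Proof. by rewrite -/(root _ _) root_subgroup_poly mem_kernel y1V L_y1 oner_eq0. Qed.

Lemma kernel_poly_on_V y : y \in V -> Lp.[y] = fp_emb k (L y) * Lp.[y1].
Proof.
move=> yV; set y' := y - fp_emb k (L y) * y1.
have Ly_y1V : fp_emb k (L y) * y1 \in V by apply: (memV_scale V0 V_closed).
have L_y' : L y' = 0 by rewrite L_sub // L_scale // L_y1 mulr1 subrr.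
have y'V : y' \in V by apply: (memV_sub pk V_closed).
have -> : Lp.[y] = Lp.[y' + fp_emb k (L y) * y1] by rewrite subrK.
rewrite (subgroup_poly_additive kernel_uniq kernel0 kernel_sub).
by rewrite kernel_poly_Fp_linear kernel_poly_vanishing // add0r.
Qed.

Local Notation lam := (Lp.[y1])^-1.

Lemma L_as_kernel_poly y : y \in V -> fp_emb k (L y) = lam * Lp.[y].
Proof.
by move=> yV; rewrite (kernel_poly_on_V yV) mulrCA mulVf ?mulr1 // kernel_poly_unit_neq0.
Qed.

(* V is the zero set of lam^p Lp^p - lam Lp: a root x has lam Lp(x) = c in
   F_p, so x - c y1 lies in ker Lp = ker L, a subset of V. *)
Lemma V_as_roots x : x \in V <-> root (lam ^+ p *: Lp ^+ p - lam *: Lp) x.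
Proof.
have Lp_y1 := kernel_poly_unit_neq0.
rewrite /root !hornerE -exprMn subr_eq0; split => [xV|/eqP].
  by rewrite -L_as_kernel_poly // fp_emb_frobenius.
move=> /(frobenius_fixed_in_Fp pk) [c lam_x].
set x' := x - fp_emb k c * y1.
have Lp_x' : Lp.[x'] = 0.
  apply: (mulfI (invr_neq0 Lp_y1)).
  have -> : x' = x + fp_emb k (- c) * y1 by rewrite fp_embN // mulNr.
  rewrite (subgroup_poly_additive kernel_uniq kernel0 kernel_sub) kernel_poly_Fp_linear.
  by rewrite mulr0 mulrDr lam_x mulrCA mulVf // mulr1 fp_embN // subrr.
have x'V : x' \in V.
  by move/rootP: Lp_x'; rewrite root_subgroup_poly mem_kernel => /andP [].
have := V_closed c y1V x'V.
by rewrite /x' addrC subrK.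
Qed.

End UnitVector.

Lemma linear_form_kernel_poly : (exists2 y, y \in V & L y != 0) ->
  let Lq : {poly k} := \prod_(y <- V | L y == 0) ('X - y%:P) in
  exists lam : k,
    [/\ lam != 0,
        (forall y, y \in V -> fp_emb k (L y) = lam * Lq.[y])
      & (forall x : k, x \in V <-> root (lam ^+ p *: Lq ^+ p - lam *: Lq) x)].
Proof.
move=> [y0 y0V Ly0] Lq; have -> : Lq = Lp by rewrite /Lq /subgroup_poly big_filter.
pose y1 := fp_emb k (L y0)^-1 * y0.
have y1V : y1 \in V by apply: (memV_scale V0 V_closed).
have L_y1 : L y1 = 1 by rewrite L_scale // mulVf.
exists (Lp.[y1])^-1; split.
- by rewrite invr_eq0 kernel_poly_unit_neq0.
- exact: L_as_kernel_poly.
- exact: V_as_roots.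
Qed.

End KernelPolynomial.

Lemma translate_translate (k : comNzRingType) (F : {poly k}) (y z : k) :
  (F \Po ('X + y%:P)) \Po ('X + z%:P) = F \Po ('X + (y + z)%:P).
Proof. by rewrite -comp_polyA comp_polyD comp_polyX comp_polyC -addrA -polyCD (addrC z). Qed.

Section Translation.
Variables (k : fieldType) (p : nat).
Hypothesis pk : p \in [pchar k].
Variables (n : nat) (f : nat -> {poly k}) (m : nat -> nat).
Hypothesis m_comb : forall lam : nat -> 'F_p,
  (exists2 i, (1 <= i <= n)%N & lam i != 0) ->
  class_size p (\sum_(1 <= i < n.+1) fp_emb k (lam i) *: f i)
               (\max_(1 <= i < n.+1 | lam i != 0) m i).+1.
Variable V : seq k.
Hypothesis V0 : 0 \in V.
Hypothesis V_closed : forall (a : 'F_p) (y z : k), y \in V -> z \in V ->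
  fp_emb k a * y + z \in V.
Variable ell : nat -> nat -> k -> 'F_p.
Hypothesis ell_def : forall (y : k) (i : nat), y \in V -> (1 <= i <= n)%N ->
  AS_equiv p (f i \Po ('X + y%:P) - f i)
             (\sum_(1 <= j < i) fp_emb k (ell j i y) *: f j).

Definition lower_comb (c : nat -> 'F_p) (i : nat) : {poly k} :=
  \sum_(1 <= j < i) fp_emb k (c j) *: f j.

Definition below (i : nat) (g : {poly k}) : Prop :=
  exists c : nat -> 'F_p, AS_image p (g - lower_comb c i).

Lemma lower_combD c c' i :
  lower_comb c i + lower_comb c' i = lower_comb (fun j => c j + c' j) i.
Proof. by rewrite /lower_comb -big_split; apply: eq_bigr => j _; rewrite fp_embD // scalerDl. Qed.

Lemma lower_combZ a c i :
  fp_emb k a *: lower_comb c i = lower_comb (fun j => a * c j) i.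
Proof. by rewrite /lower_comb scaler_sumr; apply: eq_bigr => j _; rewrite fp_embM // scalerA. Qed.

Lemma lower_combN c i : - lower_comb c i = lower_comb (fun j => - c j) i.
Proof. by rewrite /lower_comb -sumrN; apply: eq_bigr => j _; rewrite fp_embN // scaleNr. Qed.

Lemma lower_comb_succ c i : (1 <= i)%N ->
  lower_comb c i.+1 = lower_comb c i + fp_emb k (c i) *: f i.
Proof. by move=> i_gt0; rewrite /lower_comb big_nat_recr. Qed.

Lemma below_lower_comb c i : below i (lower_comb c i).
Proof. by exists c; rewrite subrr; apply: AS_image0. Qed.

Lemma below0 i : below i 0.
Proof.
have := below_lower_comb (fun _ => 0) i; congr below.
by rewrite /lower_comb big1 // => j _; rewrite fp_emb0 // scale0r.
Qed.

Lemma below_AS i g h : below i g -> AS_image p (h - g) -> below i h.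
Proof.
move=> [c Sc] Shg; exists c; rewrite (_ : h - _ = (h - g) + (g - lower_comb c i)).
  exact: AS_imageD.
by rewrite addrA subrK.
Qed.

Lemma belowD i g h : below i g -> below i h -> below i (g + h).
Proof.
move=> [c Sc] [c' Sc']; exists (fun j => c j + c' j); rewrite -lower_combD.
by rewrite opprD addrACA; apply: AS_imageD.
Qed.

Lemma belowZ i (a : 'F_p) g : below i g -> below i (fp_emb k a *: g).
Proof.
move=> [c Sc]; exists (fun j => a * c j); rewrite -lower_combZ -scalerBr.
by apply: AS_imageZ => //; apply: fp_emb_frobenius.
Qed.

Lemma belowB i g h : below i g -> below i h -> below i (g - h).
Proof.
move=> Bg Bh; apply: belowD => //.
by have := belowZ (-1) Bh; rewrite fp_embN // fp_emb1 // scaleN1r.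
Qed.

Lemma below_widen i j g : (j <= i)%N -> below j g -> below i g.
Proof.
move=> le_ji [c Sc]; exists (fun l => if (l < j)%N then c l else 0).
congr (AS_image _ (_ - _)): Sc.
rewrite /lower_comb (big_nat_widen _ _ _ _ _ le_ji) big_mkcondr /=.
by apply: eq_bigr => l _; case: ifP; rewrite ?fp_emb0 ?scale0r.
Qed.

(* Translating f_j by an element of V moves it below j (definition of ell),
   hence translating a combination of f_1, ..., f_i moves it below i. *)
Lemma below_translate_comb c i z : z \in V -> (i <= n)%N ->
  below i (lower_comb c i.+1 \Po ('X + z%:P) - lower_comb c i.+1).
Proof.
move=> zV le_in; rewrite /lower_comb raddf_sum -sumrB big_seq.
apply: (big_ind (below i)); [exact: below0 | exact: belowD |] => j.
rewrite mem_index_iota ltnS => /andP [j_gt0 le_ji].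
rewrite /= comp_polyZ -scalerBr; apply/belowZ/(below_widen le_ji).
by exists (fun l => ell l j z); apply: ell_def; rewrite // j_gt0 (leq_trans le_ji).
Qed.

Lemma below_f_scale i (d : 'F_p) : (1 <= i <= n)%N ->
  below i (fp_emb k d *: f i) -> d = 0.
Proof.
move=> /andP [i_gt0 le_in] [c Sc]; apply/eqP; apply/negPn/negP => d_neq0.
pose lam l : 'F_p := if l == i then d else if (l < i)%N then - c l else 0.
have lam_sum : \sum_(1 <= l < n.+1) fp_emb k (lam l) *: f l
             = fp_emb k d *: f i - lower_comb c i.
  rewrite (big_cat_nat i_gt0 (leq_trans le_in (leqnSn n))) [X in _ + X = _]big_ltn ?ltnS //=.
  rewrite [X in _ + (_ + X) = _]big1_seq => [|l]; last first.
    rewrite andTb mem_index_iota => /andP [lt_il _].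
    by rewrite /lam gtn_eqF // (leq_gtF (ltnW lt_il)) fp_emb0 // scale0r.
  rewrite /lam eqxx addr0 addrC /lower_comb -sumrN; congr (_ + _).
  apply: eq_big_nat => l /andP [_ lt_li].
  by rewrite ltn_eqF // lt_li fp_embN // scaleNr.
apply: (AS_image_class_size pk Sc); rewrite -lam_sum; apply: m_comb.
by exists i; rewrite ?i_gt0 ?le_in // /lam eqxx.
Qed.

Definition translate_comb (i : nat) (u : k) : {poly k} :=
  lower_comb (fun j => ell j i.+1 u) i.+1.

(* Translating the congruence for y by z and
   adding the one for z shows that C(y + z) - C(y) - C(z) lies below i, where
   C = translate_comb i; its coefficient of f_i is therefore zero. *)
Lemma ell_additive i : (1 <= i < n)%N ->
  {in V &, forall y z, ell i i.+1 (y + z) = ell i i.+1 y + ell i i.+1 z}.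
Proof.
move=> /andP [i_gt0 lt_in] y z yV zV.
have yzV := memV_add pk V_closed yV zV.
have AS_C u : u \in V ->
    AS_image p (f i.+1 \Po ('X + u%:P) - f i.+1 - translate_comb i u).
  by move=> uV; apply: ell_def; rewrite ?uV.
have AS_diff : AS_image p (translate_comb i (y + z)
    - (translate_comb i y \Po ('X + z%:P)) - translate_comb i z).
  have AS_Cy_z := AS_image_comp ('X + z%:P) (AS_C _ yV).
  have := AS_imageB pk (AS_imageD pk AS_Cy_z (AS_C _ zV)) (AS_C _ yzV).
  rewrite !comp_polyB translate_translate => AS_sum.
  by apply: (eq_ind _ _ AS_sum); ring.
have below_diff :
    below i (translate_comb i (y + z) - translate_comb i y - translate_comb i z).
  have below_Cy : below i (translate_comb i y \Po ('X + z%:P) - translate_comb i y).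
    exact: below_translate_comb zV (ltnW lt_in).
  by apply: (below_AS below_Cy); apply: (eq_ind _ _ AS_diff); ring.
pose c j := ell j i.+1 (y + z) - ell j i.+1 y - ell j i.+1 z.
move: below_diff; rewrite /translate_comb !lower_combN !lower_combD lower_comb_succ //= -/c.
move=> /belowB /(_ (below_lower_comb c i)); rewrite addrC addKr.
have i_range : (1 <= i <= n)%N by rewrite i_gt0 ltnW.
move=> /(below_f_scale i_range) /eqP.
by rewrite /c -addrA -opprD subr_eq0 => /eqP.
Qed.

Lemma ell_linear i : (1 <= i < n)%N ->
  forall (a b : 'F_p) (y z : k), y \in V -> z \in V ->
    ell i i.+1 (fp_emb k a * y + fp_emb k b * z) = a * ell i i.+1 y + b * ell i i.+1 z.
Proof. by move=> lt_in; apply: (additive_Fp_linear pk V0 V_closed); apply: ell_additive. Qed.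

End Translation.

Unset Implicit Arguments. Set Strict Implicit.

Theorem proposition2p9
  (k : closedFieldType) (p : nat) (pchar_k : p \in [pchar k])
  (V : seq k) (V_uniq : uniq V) (V0 : 0 \in V)
  (V_sub : forall (a : 'F_p) (y z : k), y \in V -> z \in V ->
             fp_emb k a * y + z \in V)
  (n : nat) (n_ge2 : (2 <= n)%N)
  (f : nat -> {poly k}) (m : nat -> nat)
  (f_red : forall i, (1 <= i <= n)%N -> reduced p (f i))
  (f_size : forall i, (1 <= i <= n)%N -> size (f i) = (m i).+1)
  (f_deg : forall i, (1 <= i <= n)%N -> class_size p (f i) (m i).+1)
  (m_ndiv : forall i, (1 <= i <= n)%N -> ~~ (p %| m i)%N)
  (m_mono : forall i j, (1 <= i)%N -> (i <= j)%N -> (j <= n)%N -> (m i <= m j)%N)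
  (m_comb : forall lam : nat -> 'F_p,
      (exists2 i, (1 <= i <= n)%N & lam i != 0) ->
      class_size p (\sum_(1 <= i < n.+1) fp_emb k (lam i) *: f i)
                   (\max_(1 <= i < n.+1 | lam i != 0) m i).+1)
  (ell : nat -> nat -> k -> 'F_p)
  (ell_def : forall (y : k) (i : nat), y \in V -> (1 <= i <= n)%N ->
      AS_equiv p (f i \Po ('X + y%:P) - f i)
                 (\sum_(1 <= j < i) fp_emb k (ell j i y) *: f j)) :
  (forall i, (1 <= i < n)%N ->
     forall (a b : 'F_p) (y z : k), y \in V -> z \in V ->
       ell i i.+1 (fp_emb k a * y + fp_emb k b * z)
         = a * ell i i.+1 y + b * ell i i.+1 z)
  /\
  (forall i, (1 <= i < n)%N ->
     (exists2 y, y \in V & ell i i.+1 y != 0) ->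
     let Lp : {poly k} := \prod_(y <- V | ell i i.+1 y == 0) ('X - y%:P) in
     exists lam : k,
       [/\ lam != 0,
           (forall y, y \in V -> fp_emb k (ell i i.+1 y) = lam * Lp.[y])
         & (forall x : k, x \in V <-> root (lam ^+ p *: Lp ^+ p - lam *: Lp) x)]).
Proof.
have part1 i (lt_in : (1 <= i < n)%N) := ell_linear pchar_k m_comb V0 V_sub ell_def lt_in.
split; first exact: part1.
by move=> i lt_in; apply: (linear_form_kernel_poly pchar_k V_uniq V0 V_sub (part1 i lt_in)).
Qed.
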